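(* Let $\mathcal O,K,k,\nu,\pi$ be as in the context. Let $\alpha\in\mathcal O((X^{-1}))$ with $\mathrm{LC}(\alpha)\in\mathcal O^*$ and $\operatorname{ord}(\alpha)\le0$, and let $\gamma=\bar\alpha\in k((X^{-1}))$. Assume $\alpha\notin K(X)$ and $\gamma\notin k(X)$. Let $(p_n,q_n)$ ($n\ge0$) be the canonical convergents of $\alpha$ over $K$ and $(u_m,v_m)$ ($m\ge0$) those of $\gamma$ over $k$. Then for every $n\ge0$, the pair $(\pi^{-\nu(q_n)}p_n,\pi^{-\nu(q_n)}q_n)$ lies in $\mathcal O[X]^2$, and its reduction $(\tilde p_n,\tilde q_n)\in k[X]^2$ satisfies $\tilde q_n\ne0$ and $\operatorname{ord}(\tilde p_n-\gamma\tilde q_n)>\deg\tilde q_n$. Moreover there are a unique $\lambda(n)\in\mathbb N_0$ and some $h_n\in k[X]\setminus\{0\}$ with $(\tilde p_n,\tilde q_n)=h_n\cdot(u_{\lambda(n)},v_{\lambda(n)})$. The map $\lambda:\mathbb N_0\to\mathbb N_0$ is non-decreasing and surjective, and if $n=\min\lambda^{-1}(m)$ then $\deg v_m=\deg q_n$.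
   Context: $\mathcal O$ is a discrete valuation ring with fraction field $K$, uniformiser $\pi$, valuation $\nu$ with $\nu(\pi)=1$, residue field $k$ of characteristic $\ne2$; bars denote coefficientwise reduction modulo the maximal ideal. For a polynomial or Laurent series $u=\sum u_nX^n$ over $K$, $\nu(u)=\inf_n\nu(u_n)$ (Gauss valuation). $F((X^{-1}))$ is the field of Laurent series $\sum_{n\le N}u_nX^n$ with $\operatorname{ord}(\sum_{n\le N}u_nX^n)=-N$ if $u_N\ne0$, and $\mathrm{LC}$ denotes the leading coefficient; $\mathcal O((X^{-1}))$ consists of those with all coefficients in $\mathcal O$. $\lfloor\alpha\rfloor$ is the unique polynomial with $\operatorname{ord}(\alpha-\lfloor\alpha\rfloor)>0$. Continued fraction: $\alpha_0=\alpha$, $\alpha_{n+1}=1/(\alpha_n-\lfloor\alpha_n\rfloor)$, partial quotients $a_n=\lfloor\alpha_n\rfloor$; canonical convergents $p_{-1}=1,q_{-1}=0,p_0=a_0,q_0=1$, $p_n=a_np_{n-1}+p_{n-2}$, $q_n=a_nq_{n-1}+q_{n-2}$. *)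

From HB Require Import structures.
From mathcomp Require Import all_boot all_order all_algebra.
Set Implicit Arguments. Unset Strict Implicit. Unset Printing Implicit Defensive.
Import Order.TTheory GRing.Theory Num.Theory.
Local Open Scope ring_scope.

(* Discrete valuation data: K is the fraction field, val the discrete  *)
(* valuation (meaningful on nonzero elements), upi a uniformiser,      *)
(* O = {0} U {x | val x >= 0}, red : O -> k the residue map (a         *)
(* surjective ring morphism on O whose kernel is the maximal ideal).   *)
Record dvr (K k : fieldType) := DVR {
  val : K -> int;
  upi : K;
  red : K -> k;
  valM : forall x y, x != 0 -> y != 0 -> val (x * y) = val x + val y;
  valD : forall x y, x != 0 -> y != 0 -> x + y != 0 ->
           Num.min (val x) (val y) <= val (x + y);
  upi_neq0 : upi != 0;
  val_upi : val upi = 1;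
  redD : forall x y, ((x == 0) || (0 <= val x)) -> ((y == 0) || (0 <= val y)) ->
           red (x + y) = red x + red y;
  redM : forall x y, ((x == 0) || (0 <= val x)) -> ((y == 0) || (0 <= val y)) ->
           red (x * y) = red x * red y;
  red1 : red 1 = 1;
  red_eq0 : forall x, ((x == 0) || (0 <= val x)) ->
           (red x == 0) = ((x == 0) || (0 < val x));
  red_surj : forall c : k, exists x, ((x == 0) || (0 <= val x)) /\ red x = c
}.

Section DVRdefs.
Variables (K k : fieldType) (D : dvr K k).
Definition inO (x : K) : bool := (x == 0) || (0 <= val D x).
Definition unitO (x : K) : bool := (x != 0) && (val D x == 0).
Definition gaussv (p : {poly K}) : int :=
  \big[Num.min/val D (lead_coef p)]_(c <- (p : seq K) | c != 0) val D c.
End DVRdefs.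

(* Laurent series in X^{-1}: LSer N c represents sum_{i>=0} c i X^(N-i) *)
Record lser (F : Type) := LSer { ltop : int; lcf : nat -> F }.

Section Laurent.
Variable F : nzRingType.

Definition lcoef (s : lser F) (d : int) : F :=
  if d <= ltop s then lcf s (absz (ltop s - d)) else 0.

Definition lmk (M : int) (f : int -> F) : lser F := LSer M (fun i => f (M - i%:Z)).

Definition lpoly (p : {poly F}) : lser F :=
  lmk (size p)%:Z (fun d => if 0 <= d then p`_(absz d) else 0).

Definition lone : lser F := lpoly 1.

Definition lsub (s t : lser F) : lser F :=
  lmk (Num.max (ltop s) (ltop t)) (fun d => lcoef s d - lcoef t d).

Definition lmul (s t : lser F) : lser F :=
  LSer (ltop s + ltop t)
       (fun n => \sum_(i < n.+1) lcf s i * lcf t (n - i)%N).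

Definition leqs (s t : lser F) : Prop := forall d, lcoef s d = lcoef t d.

Definition lfloor (s : lser F) : {poly F} :=
  \poly_(i < (absz (ltop s)).+1) lcoef s i%:Z.

(* ord s > m  (ord 0 = +oo) *)
Definition ord_gt (s : lser F) (m : int) : Prop :=
  forall d : int, - m <= d -> lcoef s d = 0.

(* N is the leading degree of s, i.e. s <> 0, ord s = -N, LC s = lcoef s N *)
Definition is_lead (s : lser F) (N : int) : Prop :=
  lcoef s N != 0 /\ forall d, N < d -> lcoef s d = 0.

Definition is_rat_ls (s : lser F) : Prop :=
  exists P Q : {poly F}, Q != 0 /\ leqs (lmul (lpoly Q) s) (lpoly P).

(* canonical convergents: cfpq a n = ((p_{n-1}, q_{n-1}), (p_n, q_n)) *)
Fixpoint cfpq (a : nat -> {poly F}) (n : nat) :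
    ({poly F} * {poly F}) * ({poly F} * {poly F}) :=
  match n with
  | 0 => ((1, 0), (a 0%N, 1))
  | n'.+1 => let: ((p1, q1), (p0, q0)) := cfpq a n' in
             ((p0, q0), (a n * p0 + p1, a n * q0 + q1))
  end.
Definition cfp a n := (cfpq a n).2.1.
Definition cfq a n := (cfpq a n).2.2.
End Laurent.

Definition lmap (F G : Type) (f : F -> G) (s : lser F) : lser G :=
  LSer (ltop s) (fun i => f (lcf s i)).

Definition is_cf_seq (F : fieldType) (al : lser F) (als : nat -> lser F) : Prop :=
  leqs (als 0%N) al /\
  forall n, leqs (lmul (als n.+1) (lsub (als n) (lpoly (lfloor (als n))))) (lone F).

(* Write e_n = q_n alpha - p_n.  The recursion of the convergents and alpha_n (alpha_{n-1} -
   a_{n-1}) = 1 give e_n alpha_{n+1} = - e_{n-1}, hence ord e_n = deg q_{n+1}.  Conversely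
   (Legendre), if deg q <= D < deg q_{m+1} and ord (q alpha - p) > D, then p q_m = q p_m by
   comparing degrees, and p_m q_{m+1} - p_{m+1} q_m = +-1 turns this into (p, q) = h (p_m, q_m).
   Dividing (p_n, q_n) by pi^(Gauss valuation of q_n) makes it integral and primitive, and
   reduction modulo pi preserves the order of approximation.  So the reduced pair approximates
   gamma to order > deg q_n and is a multiple of (u_m, v_m) exactly for the m with
   deg v_m <= deg q_n < deg v_{m+1}; this m is lambda(n).  The same order bound gives
   deg q_{n+1} <= deg v_{lambda(n)+1}, so the degrees deg q_n cannot jump over any deg v_m,
   which makes lambda surjective, with deg v_m = deg q_n for the least n such that lambda(n) = m. *)

From Pilot Require Import Defs.
From HB Require Import structures.
From mathcomp Require Import all_boot all_order all_algebra.
From Stdlib Require Import Setoid Morphisms Ring Classical.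
From mathcomp Require Import zify ring.
Set Implicit Arguments. Unset Strict Implicit. Unset Printing Implicit Defensive.
Import Order.TTheory GRing.Theory Num.Theory.
Local Open Scope ring_scope.

Section WindowSum.
Variable V : nmodType.
Implicit Types (g : int -> V) (A : int) (N : nat).

Definition wsum g A N := \sum_(i < N) g (A - i%:Z).

Definition supp_in g A N := forall j, j <= A - N%:Z \/ A < j -> g j = 0.

Lemma wsum_split g A N1 N2 : wsum g A (N1 + N2) = wsum g A N1 + wsum g (A - N1%:Z) N2.
Proof.
rewrite /wsum big_split_ord /=; congr (_ + _); apply: eq_bigr => i _.
by rewrite PoszD opprD addrA.
Qed.

Lemma wsum_eq0 g A N : (forall i : nat, (i < N)%N -> g (A - i%:Z) = 0) -> wsum g A N = 0.
Proof. by move=> h; rewrite /wsum big1 // => i _; apply: h. Qed.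

Lemma wsum_widen g A N A' N' : supp_in g A N -> A <= A' -> A' - N'%:Z <= A - N%:Z ->
  wsum g A' N' = wsum g A N.
Proof.
move=> hg hA hN; pose k := absz (A' - A); pose r := (N' - (k + N))%N.
have -> : N' = (k + (N + r))%N by rewrite /r /k; lia.
rewrite !wsum_split (_ : A' - k%:Z = A); last by rewrite /k; lia.
rewrite (@wsum_eq0 _ A' k) ?(@wsum_eq0 _ (A - N%:Z) r) ?add0r ?addr0 // => i hi;
  apply: hg; [left | right]; rewrite /k in hi; lia.
Qed.

Lemma wsum_supp_eq g A N A' N' : supp_in g A N -> supp_in g A' N' ->
  wsum g A' N' = wsum g A N.
Proof.
move=> h h'; pose B : int := Num.max A A'.
pose M := absz (B - Num.min (A - N%:Z) (A' - N'%:Z))%R.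
by rewrite -(@wsum_widen g A N B M) // -?(@wsum_widen g A' N' B M) //; rewrite /M /B; lia.
Qed.
End WindowSum.

Section LaurentSeries.
Variable F : nzRingType.
Implicit Types (s t u : lser F) (p q : {poly F}) (d A : int).

Lemma lcoef_lmk M (f : int -> F) d : lcoef (lmk M f) d = if d <= M then f d else 0.
Proof. by rewrite /lcoef /lmk /=; case: ifP => // h; congr f; lia. Qed.

Lemma lcoef_ltop s (i : nat) : lcoef s (ltop s - i%:Z) = lcf s i.
Proof. by rewrite /lcoef ifT; [congr lcf |]; lia. Qed.

Lemma lcoef_gt s d : ltop s < d -> lcoef s d = 0.
Proof. by rewrite /lcoef ltNge => /negbTE ->. Qed.

Definition conv s t d j := lcoef s j * lcoef t (d - j).

Lemma lcoef_lmul_supp s t d A N : supp_in (conv s t d) A N ->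
  lcoef (lmul s t) d = wsum (conv s t d) A N.
Proof.
pose N0 := if d <= ltop s + ltop t then (absz (ltop s + ltop t - d)%R).+1 else 0%N.
have top_window : lcoef (lmul s t) d = wsum (conv s t d) (ltop s) N0.
  rewrite /N0 /lcoef /=; case: ifP => hd; last by rewrite /wsum big_ord0.
  apply: eq_bigr => -[i hi] _; rewrite /conv -/(lcoef s _) lcoef_ltop /=.
  by rewrite (_ : d - _ = ltop t - (absz (ltop s + ltop t - d)%R - i)%N%:Z) ?lcoef_ltop //; lia.
have supp0 : supp_in (conv s t d) (ltop s) N0.
  move=> j hj; rewrite /conv; have [hs|hs] := ltP (ltop s) j; first by rewrite lcoef_gt ?mul0r.
  by rewrite (@lcoef_gt t) ?mulr0 //; move: hj; rewrite /N0; case: ifP; lia.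
by move=> h; rewrite top_window; apply: wsum_supp_eq.
Qed.

Lemma lcoef_lmul_window s t d A N : ltop s <= A -> A - N%:Z < d - ltop t ->
  lcoef (lmul s t) d = wsum (conv s t d) A N.
Proof.
move=> h1 h2; apply: lcoef_lmul_supp => j [hj|hj]; rewrite /conv.
  by rewrite (@lcoef_gt t) ?mulr0 //; lia.
by rewrite lcoef_gt ?mul0r //; lia.
Qed.

Definition lzero : lser F := LSer 0 (fun _ => 0).
Definition ladd s t := lmk (Num.max (ltop s) (ltop t)) (fun d => lcoef s d + lcoef t d).
Definition lopp s : lser F := LSer (ltop s) (fun i => - lcf s i).

Lemma lcoef_lzero d : lcoef lzero d = 0.
Proof. by rewrite /lcoef; case: ifP. Qed.

Lemma lcoef_ladd s t d : lcoef (ladd s t) d = lcoef s d + lcoef t d.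
Proof. by rewrite lcoef_lmk; case: ifP => // h; rewrite !lcoef_gt ?addr0 //; lia. Qed.

Lemma lcoef_lsub s t d : lcoef (lsub s t) d = lcoef s d - lcoef t d.
Proof. by rewrite lcoef_lmk; case: ifP => // h; rewrite !lcoef_gt ?subr0 //; lia. Qed.

Lemma lcoef_lopp s d : lcoef (lopp s) d = - lcoef s d.
Proof. by rewrite /lcoef /=; case: ifP; rewrite ?oppr0. Qed.

Lemma lcoef_lpoly p d : lcoef (lpoly p) d = if 0 <= d then p`_(absz d) else 0.
Proof.
rewrite lcoef_lmk; case: ifP => // h; case: ifP => // h0.
by rewrite nth_default //; move/negbT: h; move: (size p) => n; lia.
Qed.

Lemma lcoef_lpoly_nat p (i : nat) : lcoef (lpoly p) i%:Z = p`_i.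
Proof. by rewrite lcoef_lpoly. Qed.

Lemma lcoef_lone d : lcoef (lone F) d = (d == 0)%:R.
Proof.
rewrite lcoef_lpoly coefC; case: (d =P 0) => [->|/eqP hd] //.
by rewrite absz_eq0 (negbTE hd) if_same.
Qed.

Lemma leqs_refl s : leqs s s. Proof. by []. Qed.

Lemma leqs_sym s t : leqs s t -> leqs t s. Proof. by move=> h d; rewrite h. Qed.

Lemma leqs_trans s t u : leqs s t -> leqs t u -> leqs s u.
Proof. by move=> h1 h2 d; rewrite h1 h2. Qed.

Lemma lmul1 s : leqs (lmul (lone F) s) s.
Proof.
move=> d; rewrite (@lcoef_lmul_supp _ _ _ 0 1).
  by rewrite /wsum big_ord1 /conv !subr0 lcoef_lone mul1r.
move=> j hj; rewrite /conv lcoef_lone; case: (j =P 0) => [hj0|]; last by rewrite mul0r.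
by move: hj; rewrite hj0 => -[]; lia.
Qed.

Lemma lmulA s t u : leqs (lmul s (lmul t u)) (lmul (lmul s t) u).
Proof.
move=> d; pose M := (absz (ltop s + ltop t + ltop u - d)%R).+1.
rewrite (@lcoef_lmul_window (lmul s t) u d (ltop s + ltop t) M) //; last by rewrite /M; lia.
rewrite (@lcoef_lmul_window s (lmul t u) d (ltop s) M) //; last by rewrite /M /=; lia.
have inner_st (i : 'I_M) : lcoef (lmul s t) (ltop s + ltop t - i%:Z) =
    \sum_(j < M) lcoef s (ltop s - j%:Z) * lcoef t (ltop t - i%:Z + j%:Z).
  rewrite (@lcoef_lmul_window s t _ (ltop s) M) //; last by case: i => i /= hi; lia.
  by apply: eq_bigr => j _; rewrite /conv; congr (_ * lcoef _ _); lia.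
have inner_tu (j : 'I_M) : lcoef (lmul t u) (d - (ltop s - j%:Z)) =
    \sum_(i < M) lcoef t (ltop t - i%:Z + j%:Z) * lcoef u (d - (ltop s + ltop t - i%:Z)).
  rewrite (@lcoef_lmul_window t u _ (ltop t + j%:Z) M) ?lerDl //; last by rewrite /M; lia.
  by apply: eq_bigr => i _; rewrite /conv; congr (lcoef _ _ * lcoef _ _); lia.
rewrite /wsum /conv.
under [RHS]eq_bigr do rewrite inner_st mulr_suml.
under [LHS]eq_bigr do rewrite inner_tu mulr_sumr.
rewrite exchange_big /=; apply: eq_bigr => j _; apply: eq_bigr => i _.
by rewrite mulrA.
Qed.

Lemma lmulDl s t u : leqs (lmul (ladd s t) u) (ladd (lmul s u) (lmul t u)).
Proof.
move=> d; rewrite lcoef_ladd.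
pose A : int := Num.max (ltop s) (ltop t).
pose M := (absz (A + ltop u - d)%R).+1.
rewrite !(@lcoef_lmul_window _ u d A M); try (rewrite /M /A /=; lia).
by rewrite /wsum -big_split /=; apply: eq_bigr => i _; rewrite /conv lcoef_ladd mulrDl.
Qed.

Lemma lmul_ext s s' t t' : leqs s s' -> leqs t t' -> leqs (lmul s t) (lmul s' t').
Proof.
move=> hs ht d; pose A : int := Num.max (ltop s) (ltop s').
pose M := (absz (A + Num.max (ltop t) (ltop t') - d)%R).+1.
rewrite (@lcoef_lmul_window s t d A M) ?(@lcoef_lmul_window s' t' d A M); try (rewrite /M /A; lia).
by apply: eq_bigr => i _; rewrite /conv hs ht.
Qed.

Lemma lpolyD p q : leqs (lpoly (p + q)) (ladd (lpoly p) (lpoly q)).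
Proof. by move=> d; rewrite lcoef_ladd !lcoef_lpoly coefD; case: ifP; rewrite ?addr0. Qed.

Lemma lpolyB p q : leqs (lpoly (p - q)) (lsub (lpoly p) (lpoly q)).
Proof. by move=> d; rewrite lcoef_lsub !lcoef_lpoly coefB; case: ifP; rewrite ?subr0. Qed.

Lemma lpoly0 : leqs (lpoly 0) lzero.
Proof. by move=> d; rewrite lcoef_lzero lcoef_lpoly coef0 if_same. Qed.

Lemma lpolyM p q : leqs (lpoly (p * q)) (lmul (lpoly p) (lpoly q)).
Proof.
move=> d; have supp A N : (forall j, 0 <= j <= d -> A - N%:Z < j <= A) ->
    supp_in (conv (lpoly p) (lpoly q) d) A N.
  move=> hA j hj; rewrite /conv !lcoef_lpoly.
  case: ifP => [h1|_]; last by rewrite mul0r.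
  case: ifP => [h2|_]; last by rewrite mulr0.
  by have := hA j; lia.
rewrite lcoef_lpoly; case: ifP => hd; last first.
  by rewrite (@lcoef_lmul_supp _ _ _ (-1) 0) ?/wsum ?big_ord0 //; apply: supp; lia.
rewrite (@lcoef_lmul_supp _ _ _ d (absz d).+1); last by apply: supp; lia.
rewrite coefMr; apply: eq_bigr => -[i hi] _; rewrite /conv !lcoef_lpoly /=.
by rewrite !ifT; [congr (_ * _); congr nth; lia | lia | lia].
Qed.
End LaurentSeries.

Section LaurentRing.
Variable F : comNzRingType.
Implicit Types (s t u : lser (F : nzRingType)) (d : int).

Lemma lmulC s t : leqs (lmul s t) (lmul t s).
Proof.
move=> d; set N := (absz (ltop s + ltop t - d)%R).+1.
rewrite (@lcoef_lmul_window _ s t d (ltop s) N) //; last by rewrite /N; lia.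
rewrite (@lcoef_lmul_window _ t s d (d - ltop s + N%:Z - 1) N); last 2 first.
- by rewrite /N; lia.
- lia.
rewrite /wsum (reindex_inj rev_ord_inj) /=; apply: eq_bigr => -[i hi] _ /=.
by rewrite /conv mulrC; congr (lcoef _ _ * lcoef _ _); lia.
Qed.

Lemma lring_theory :
  ring_theory (@lzero F) (lone F) (@ladd F) (@lmul F) (@lsub F) (@lopp F) (@leqs F).
Proof.
split.
- by move=> s d; rewrite lcoef_ladd lcoef_lzero add0r.
- by move=> s t d; rewrite !lcoef_ladd addrC.
- by move=> s t u d; rewrite !lcoef_ladd addrA.
- exact: lmul1.
- exact: lmulC.
- exact: lmulA.
- exact: lmulDl.
- by move=> s t d; rewrite lcoef_ladd lcoef_lsub lcoef_lopp.
- by move=> s d; rewrite lcoef_ladd lcoef_lopp lcoef_lzero subrr.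
Qed.

Lemma leqs_setoid : Setoid_Theory (lser F) (@leqs F).
Proof. by split; [exact: leqs_refl | exact: leqs_sym | exact: leqs_trans]. Qed.

Lemma lring_ext : ring_eq_ext (@ladd F) (@lmul F) (@lopp F) (@leqs F).
Proof.
split=> [s s' hs t t' ht d|s s' hs t t' ht|s s' hs d].
- by rewrite !lcoef_ladd hs ht.
- exact: lmul_ext.
- by rewrite !lcoef_lopp hs.
Qed.

#[global] Instance leqs_equiv : Equivalence (@leqs F).
Proof. by split; [exact: leqs_refl | exact: leqs_sym | exact: leqs_trans]. Qed.
#[global] Instance ladd_proper : Proper (@leqs F ==> @leqs F ==> @leqs F) (@ladd F).
Proof. by move=> s s' hs t t' ht d; rewrite !lcoef_ladd hs ht. Qed.
#[global] Instance lmul_proper : Proper (@leqs F ==> @leqs F ==> @leqs F) (@lmul F).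
Proof. by move=> s s' hs t t' ht; apply: lmul_ext. Qed.
#[global] Instance lsub_proper : Proper (@leqs F ==> @leqs F ==> @leqs F) (@lsub F).
Proof. by move=> s s' hs t t' ht d; rewrite !lcoef_lsub hs ht. Qed.
#[global] Instance lopp_proper : Proper (@leqs F ==> @leqs F) (@lopp F).
Proof. by move=> s s' hs d; rewrite !lcoef_lopp hs. Qed.
End LaurentRing.

Section LaurentLead.
Variable F : idomainType.
Implicit Types (s t u : lser (F : nzRingType)) (p : {poly F}) (d a L : int).

Definition lnull s := forall d, lcoef s d = 0.

Definition vanish_above s a := forall d, a < d -> lcoef s d = 0.

Lemma is_lead_vanish_above s L : is_lead s L -> vanish_above s L.
Proof. by case. Qed.

Lemma is_lead_exists s : ~ lnull s -> exists L, is_lead s L.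
Proof.
move=> hnz; have [d0 hd0] : exists d0, lcoef s d0 != 0.
  by apply: NNPP => h; apply: hnz => d; apply/eqP; apply: contra_notT h => ?; exists d.
have hd0s : d0 <= ltop s by rewrite leNgt; apply: contra hd0 => /lcoef_gt ->.
have hex : exists i : nat, lcoef s (ltop s - i%:Z) != 0.
  by exists (absz (ltop s - d0)); rewrite (_ : _ - _ = d0) //; lia.
case: (ex_minnP hex) => i0 hi0 hmin; exists (ltop s - i0%:Z); split => // d hd.
have [hds|/lcoef_gt //] := leP d (ltop s).
rewrite (_ : d = ltop s - (absz (ltop s - d))%:Z); last by lia.
by apply/eqP; apply: contraT => /hmin; lia.
Qed.

Lemma is_lead_uniq s L1 L2 : is_lead s L1 -> is_lead s L2 -> L1 = L2.
Proof.
move=> [h1 h1'] [h2 h2']; apply/eqP; rewrite eq_le !leNgt; apply/andP.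
by split; [apply/negP => /h2' h; move: h1 | apply/negP => /h1' h; move: h2]; rewrite h eqxx.
Qed.

Lemma is_lead_leqs s t L : leqs s t -> is_lead s L -> is_lead t L.
Proof. by move=> h [h1 h2]; split => [|d hd]; rewrite -h //; apply: h2. Qed.

Lemma vanish_above_lmul s t a b : vanish_above s a -> vanish_above t b ->
  vanish_above (lmul s t) (a + b).
Proof.
move=> hs ht d hd; rewrite (@lcoef_lmul_supp _ _ _ _ a 0) ?/wsum ?big_ord0 // => j hj.
by rewrite /conv; have [/hs ->|hj'] := ltP a j; rewrite ?mul0r // ht ?mulr0 //; lia.
Qed.

Lemma is_lead_lmul s t L1 L2 : is_lead s L1 -> is_lead t L2 -> is_lead (lmul s t) (L1 + L2).
Proof.
move=> hs ht; split; last by apply: vanish_above_lmul; apply: is_lead_vanish_above.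
rewrite (@lcoef_lmul_supp _ _ _ _ L1 1).
  by rewrite /wsum big_ord1 /conv subr0 addrC addKr mulf_neq0 //; [case: hs | case: ht].
move=> j [hj|hj]; rewrite /conv; last by rewrite (is_lead_vanish_above hs) ?mul0r.
by rewrite (is_lead_vanish_above ht) ?mulr0 //; lia.
Qed.

Lemma lnull_lmul s t : lnull t -> lnull (lmul s t).
Proof.
move=> ht d; rewrite (@lcoef_lmul_supp _ _ _ _ 0 0) ?/wsum ?big_ord0 // => j _.
by rewrite /conv ht mulr0.
Qed.

Lemma is_lead_lnull s L : is_lead s L -> ~ lnull s.
Proof. by move=> [h _] hz; move: h; rewrite hz eqxx. Qed.

Lemma is_lead_lone : is_lead (lone F) 0.
Proof.
split=> [|d hd]; first by rewrite lcoef_lone eqxx oner_neq0.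
by rewrite lcoef_lone (gt_eqF hd).
Qed.

Lemma lmul_eq_lone_nonnull s t : leqs (lmul s t) (lone F) -> ~ lnull s /\ ~ lnull t.
Proof.
move=> h; have one_nnull := is_lead_lnull is_lead_lone.
split=> hz; apply: one_nnull => d; rewrite -h; last exact: lnull_lmul.
by rewrite (lmulC s t); apply: lnull_lmul.
Qed.

Lemma is_lead_ldiv s t u Lt Lu : leqs (lmul s t) u -> is_lead t Lt -> is_lead u Lu ->
  is_lead s (Lu - Lt).
Proof.
move=> h ht hu; have [Ls hLs] : exists Ls, is_lead s Ls.
  apply: is_lead_exists => hz; apply: (is_lead_lnull hu) => d.
  by rewrite -h (lmulC s t); apply: lnull_lmul.
by rewrite -(is_lead_uniq (is_lead_leqs h (is_lead_lmul hLs ht)) hu) addrK.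
Qed.

Lemma is_lead_lopp s L : is_lead s L -> is_lead (lopp s) L.
Proof.
by move=> [h1 h2]; split=> [|d hd]; rewrite lcoef_lopp ?oppr_eq0 // h2 ?oppr0.
Qed.

Lemma vanish_above_lpoly p a : (size p).-1%:Z <= a -> vanish_above (lpoly p) a.
Proof.
move=> ha d hd; rewrite lcoef_lpoly; case: ifP => // _.
by rewrite nth_default //; move: ha hd; move: (size p) => n; lia.
Qed.

Lemma is_lead_lpoly p : p != 0 -> is_lead (lpoly p) (size p).-1%:Z.
Proof.
move=> hp; split; last by apply: vanish_above_lpoly.
by rewrite lcoef_lpoly_nat -lead_coefE lead_coef_eq0.
Qed.
End LaurentLead.

Definition lerr (F : nzRingType) (be : lser F) (p q : {poly F}) :=
  lsub (lmul be (lpoly q)) (lpoly p).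

(* [approx be p q X] : ord (q be - p) >= X. *)
Definition approx (F : idomainType) (be : lser F) (p q : {poly F}) (X : int) :=
  vanish_above (lerr be p q) (- X).

Lemma ord_gt_approx (F : idomainType) (be : lser F) p q (X m : int) :
  m < X -> approx be p q X -> ord_gt (lsub (lpoly p) (lmul be (lpoly q))) m.
Proof.
move=> hm hpq d hd; apply/eqP; rewrite lcoef_lsub subr_eq0 eq_sym -subr_eq0 -lcoef_lsub.
by apply/eqP/hpq; lia.
Qed.

Lemma approx_le (F : idomainType) (be : lser F) p q (X X' : int) :
  X' <= X -> approx be p q X -> approx be p q X'.
Proof. by move=> hX hpq d hd; apply: hpq; lia. Qed.

Lemma cross_eq_common_factor (R : comNzRingType) (P Q P1 Q1 p q : R) :
  (P * Q1 - P1 * Q) ^+ 2 = 1 -> p * Q = q * P ->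
  exists h, p = h * P /\ q = h * Q.
Proof.
set dl := P * Q1 - P1 * Q => hdl e; exists (dl * (p * Q1 - q * P1)).
have eP : dl * (p * Q1 - q * P1) * P = dl ^+ 2 * p + dl * P1 * (p * Q - q * P).
  by rewrite /dl; ring.
have eQ : dl * (p * Q1 - q * P1) * Q = dl ^+ 2 * q + dl * Q1 * (p * Q - q * P).
  by rewrite /dl; ring.
by rewrite eP eQ e subrr !mulr0 !addr0 hdl !mul1r.
Qed.

Section ContinuedFraction.
Variable F : fieldType.
(* [ring []] is the setoid [ring] of Stdlib, used for Laurent series; plain [ring] is
   MathComp's.  The casts restate the carrier along the coercion path [fieldType >-> nzRingType]
   used by the goals, which the ring lookup compares syntactically. *)
Add Ring lring :
  (@lring_theory F :
     ring_theory (@lzero F) (lone F) (@ladd F) (@lmul F) (@lsub F) (@lopp F) (@leqs F))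
  (setoid (@leqs_setoid F : Setoid_Theory (lser F) (@leqs F))
          (@lring_ext F : ring_eq_ext (@ladd F) (@lmul F) (@lopp F) (@leqs F))).
Implicit Types (s t : lser (F : nzRingType)) (p q h : {poly F}) (d L : int).

Lemma coef_lfloor s (i : nat) :
  (lfloor s)`_i = if (i <= absz (ltop s))%N then lcoef s i%:Z else 0.
Proof. by rewrite /lfloor coef_poly ltnS. Qed.

Lemma lcoef_lfrac s d : 0 <= d -> lcoef (lsub s (lpoly (lfloor s))) d = 0.
Proof.
move=> hd; rewrite lcoef_lsub lcoef_lpoly hd coef_lfloor.
case: ifP => h; first by rewrite gez0_abs // subrr.
by rewrite lcoef_gt ?subr0 //; move/negbT: h; lia.
Qed.

Lemma is_lead_lfloor s L : is_lead s L -> 0 <= L -> is_lead (lpoly (lfloor s)) L.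
Proof.
move=> [hL habove] hL0; have hLs : L <= ltop s.
  by rewrite leNgt; apply: contra hL => /lcoef_gt ->.
split=> [|d hd]; rewrite lcoef_lpoly.
  by rewrite hL0 coef_lfloor (_ : (_ <= _)%N) ?gez0_abs //; lia.
by case: ifP => // hd0; rewrite coef_lfloor gez0_abs // habove ?if_same //; lia.
Qed.

Lemma approx_scale (be : lser F) p q (c : F) X : approx be p q X -> approx be (c *: p) (c *: q) X.
Proof.
move=> hpq d hd.
have factor : leqs (lerr be (c *: p) (c *: q)) (lmul (lpoly c%:P) (lerr be p q)).
  by rewrite /lerr -!mul_polyC !lpolyM; ring [].
have hc : (size c%:P).-1%:Z <= 0 by rewrite size_polyC; case: (c != 0).
by rewrite factor; apply: (vanish_above_lmul (vanish_above_lpoly hc) hpq); rewrite add0r.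
Qed.

Section Convergents.
Variables (be : lser F) (bs : nat -> lser F).
Hypothesis hcf : is_cf_seq be bs.

Local Notation a i := (lfloor (bs i)).
Local Notation cfpq_bs := (cfpq (fun i => lfloor (bs i))).
Local Notation P n := (cfpq_bs n).2.1.
Local Notation Q n := (cfpq_bs n).2.2.
Local Notation P' n := (cfpq_bs n).1.1.
Local Notation Q' n := (cfpq_bs n).1.2.

Lemma is_lead_quotient i :
  is_lead (bs i.+1) (size (a i.+1)).-1%:Z /\ (0 < (size (a i.+1)).-1)%N.
Proof.
have h := hcf.2 i; have [/is_lead_exists[Lb hb] /is_lead_exists[Lf hf]] := lmul_eq_lone_nonnull h.
have hsum : Lb + Lf = 0 := is_lead_uniq (is_lead_leqs h (is_lead_lmul hb hf)) (is_lead_lone F).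
have hLf : Lf < 0.
  by rewrite ltNge; apply: contraTN (proj1 hf) => /lcoef_lfrac ->; rewrite eqxx.
have hLb : 0 <= Lb by lia.
have ha : a i.+1 != 0.
  apply: contraTneq (proj1 (is_lead_lfloor hb hLb)) => ->.
  by rewrite lcoef_lpoly coef0 if_same eqxx.
have hdeg : Lb = (size (a i.+1)).-1%:Z := is_lead_uniq (is_lead_lfloor hb hLb) (is_lead_lpoly ha).
by rewrite -hdeg; split=> //; lia.
Qed.

Lemma cfpqS n : cfpq_bs n.+1 = ((P n, Q n), (a n.+1 * P n + P' n, a n.+1 * Q n + Q' n)).
Proof. by rewrite /=; case: (cfpq_bs n) => [[? ?] [? ?]]. Qed.

Lemma size_cfq n :
  (size (Q' n) < size (Q n))%N /\ size (Q n.+1) = (size (Q n) + (size (a n.+1)).-1)%N.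
Proof.
have step m : (size (Q' m) < size (Q m))%N -> size (Q m.+1) = (size (Q m) + (size (a m.+1)).-1)%N.
  move=> hm; have [_ ha] := is_lead_quotient m.
  have haz : a m.+1 != 0 by rewrite -size_poly_gt0; lia.
  have hqz : Q m != 0 by rewrite -size_poly_gt0; lia.
  (* [lia] sees [size] terms reached along different coercion paths as distinct atoms;
     generalizing them first identifies them. *)
  rewrite cfpqS /= size_polyDl size_mul //;
    by move: (size (a m.+1)) (size (Q m)) (size (Q' m)) ha hm => x y z; lia.
elim: n => [|n [IH1 IH2]].
  have h01 : (size (Q' 0) < size (Q 0))%N by rewrite /= size_poly0 size_poly1.
  by split=> //; apply: step.
have h1 : (size (Q' n.+1) < size (Q n.+1))%N.
  rewrite IH2 cfpqS /=; have [_ ha] := is_lead_quotient n.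
  by move: (size (a n.+1)) (size (Q n)) ha => x y; lia.
by split=> //; apply: step.
Qed.

Lemma cfq_neq0 n : Q n != 0.
Proof. by rewrite -size_poly_gt0; have [h _] := size_cfq n; lia. Qed.

Lemma size_cfq0 : (size (Q 0)).-1 = 0%N.
Proof. by rewrite /= size_poly1. Qed.

Lemma size_cfqS n : (size (Q n.+1)).-1 = ((size (Q n)).-1 + (size (a n.+1)).-1)%N.
Proof. by have [h1 ->] := size_cfq n; have [_ ha] := is_lead_quotient n; lia. Qed.

Lemma size_cfq_lt n : ((size (Q n)).-1 < (size (Q n.+1)).-1)%N.
Proof. by rewrite size_cfqS; have [_ ha] := is_lead_quotient n; lia. Qed.

Lemma cf_det n : P' n * Q n - P n * Q' n = (-1) ^+ n.
Proof.
elim: n => [|n IH]; first by rewrite /= mulr1 mulr0 subr0.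
by rewrite cfpqS /= exprS -IH; ring.
Qed.

Lemma cf_det_sq n : (P n * Q n.+1 - P n.+1 * Q n) ^+ 2 = 1.
Proof.
have := cf_det n.+1; rewrite cfpqS /= => ->.
by rewrite -exprM mulnC exprM sqrrN expr1n expr1n.
Qed.

Lemma cfpq_prev n : (cfpq_bs n.+1).1 = (cfpq_bs n).2.
Proof. by rewrite /=; case: (cfpq_bs n) => [[? ?] [? ?]]. Qed.

Lemma cf_err_rel n :
  leqs (lmul (lerr be (P n) (Q n)) (bs n.+1)) (lopp (lerr be (P' n) (Q' n))).
Proof.
elim: n => [|n IH].
  rewrite /lerr /= lpoly0; change (lpoly 1) with (lone F); rewrite -hcf.1.
  transitivity (lmul (bs 1) (lsub (bs 0) (lpoly (a 0)))); first by ring [].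
  by rewrite hcf.2; ring [].
have rec : leqs (lerr be (P n.+1) (Q n.+1))
    (ladd (lmul (lpoly (a n.+1)) (lerr be (P n) (Q n))) (lerr be (P' n) (Q' n))).
  by rewrite cfpqS /lerr /= !lpolyD !lpolyM; ring [].
have IH' : leqs (lerr be (P' n) (Q' n)) (lopp (lmul (lerr be (P n) (Q n)) (bs n.+1))).
  by rewrite IH; ring [].
rewrite rec IH' cfpq_prev.
transitivity (lmul (lopp (lerr be (P n) (Q n)))
                   (lmul (bs n.+2) (lsub (bs n.+1) (lpoly (a n.+1))))); first by ring [].
by rewrite hcf.2; ring [].
Qed.

Lemma is_lead_cf_err n : is_lead (lerr be (P n) (Q n)) (- (size (Q n.+1)).-1%:Z).
Proof.
have step m : is_lead (lerr be (P' m) (Q' m)) (- (size (Q m)).-1%:Z) ->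
    is_lead (lerr be (P m) (Q m)) (- (size (Q m.+1)).-1%:Z).
  move=> h; have := is_lead_ldiv (cf_err_rel m) (is_lead_quotient m).1 (is_lead_lopp h).
  by rewrite size_cfqS PoszD opprD.
elim: n => [|n IH]; apply: step; last by rewrite cfpq_prev.
have init : leqs (lopp (lone F)) (lerr be (P' 0) (Q' 0)).
  by rewrite /lerr /= lpoly0; change (lpoly 1) with (lone F); ring [].
by rewrite size_cfq0; apply: is_lead_leqs init (is_lead_lopp (is_lead_lone F)).
Qed.

Lemma approx_cf n : approx be (P n) (Q n) (size (Q n.+1)).-1%:Z.
Proof. exact: is_lead_vanish_above (is_lead_cf_err n). Qed.

Lemma approx_cross_eq m p q (Dg : nat) : (size q <= Dg.+1)%N -> approx be p q Dg.+1%:Z ->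
  ((size (Q m)).-1 <= Dg < (size (Q m.+1)).-1)%N -> p * Q m = q * P m.
Proof.
move=> hq hpq /andP[hlo hhi]; apply/eqP; rewrite -subr_eq0; apply/eqP/polyP => i.
have cross : leqs (lpoly (p * Q m - q * P m))
    (lsub (lmul (lpoly q) (lerr be (P m) (Q m))) (lmul (lpoly (Q m)) (lerr be p q))).
  by rewrite /lerr lpolyB !lpolyM; ring [].
have van1 : vanish_above (lmul (lpoly q) (lerr be (P m) (Q m))) (-1).
  move=> d hd; apply: (vanish_above_lmul (vanish_above_lpoly (lexx _)) (is_lead_cf_err m).2).
  by move: (size q) hq hhi hd => z; lia.
have van2 : vanish_above (lmul (lpoly (Q m)) (lerr be p q)) (-1).
  move=> d hd; apply: (vanish_above_lmul (vanish_above_lpoly (lexx _)) hpq).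
  by move: (size (Q m)) hlo hd => z; lia.
by rewrite coef0 -lcoef_lpoly_nat cross lcoef_lsub van1 ?van2 ?subr0.
Qed.

Lemma approx_cf_multiple m p q (Dg : nat) : q != 0 -> (size q <= Dg.+1)%N ->
  approx be p q Dg.+1%:Z -> ((size (Q m)).-1 <= Dg < (size (Q m.+1)).-1)%N ->
  exists2 h, h != 0 & p = h * P m /\ q = h * Q m.
Proof.
move=> hq0 hq hpq hm.
have [h [-> eq]] := cross_eq_common_factor (cf_det_sq m) (approx_cross_eq hq hpq hm).
by exists h => //; apply: contraNneq hq0 => h0; rewrite eq h0 mul0r.
Qed.

Lemma approx_multiple_bound m h (X : int) : h != 0 ->
  approx be (h * P m) (h * Q m) X -> X <= (size (Q m.+1)).-1%:Z - (size h).-1%:Z.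
Proof.
move=> hh hap; rewrite leNgt; apply/negP => hX.
have factor : leqs (lmul (lpoly h) (lerr be (P m) (Q m))) (lerr be (h * P m) (h * Q m)).
  by rewrite /lerr !lpolyM; ring [].
have [hlead _] := is_lead_leqs factor (is_lead_lmul (is_lead_lpoly hh) (is_lead_cf_err m)).
by move: hlead; rewrite hap ?eqxx //; move: hX; move: (size h) (size (Q m.+1)) => x y; lia.
Qed.
End Convergents.
End ContinuedFraction.

Section Bracket.
Variable w : nat -> nat.
Hypotheses (w0 : w 0 = 0%N) (w_lt : forall m, (w m < w m.+1)%N).

Lemma bracket_mono : {mono w : m n / (m <= n)%N}.
Proof. exact: leq_mono (homo_ltn ltn_trans w_lt). Qed.

Lemma bracket_mono_lt : {mono w : m n / (m < n)%N}.
Proof. by move=> m n; rewrite !ltnNge bracket_mono. Qed.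

Lemma bracket_exists x : exists m, (w m <= x < w m.+1)%N.
Proof.
have hex : exists m, (x < w m.+1)%N.
  exists x; elim: x => [|x IH]; first by have := w_lt 0; rewrite w0.
  exact: leq_ltn_trans IH (w_lt _).
case: (ex_minnP hex) => m hm hmin; exists m; rewrite hm andbT.
case: m hm hmin => [|m] hm hmin; first by rewrite w0.
by rewrite leqNgt; apply/negP => /hmin; rewrite ltnn.
Qed.

Lemma bracket_uniq x m m' :
  (w m <= x < w m.+1)%N -> (w m' <= x < w m'.+1)%N -> m = m'.
Proof.
move=> /andP[h1 h2] /andP[h3 h4].
apply/eqP; rewrite eqn_leq -(ltnS m) -(ltnS m') -(bracket_mono_lt m) -(bracket_mono_lt m').
by rewrite (leq_ltn_trans h1 h4) (leq_ltn_trans h3 h2).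
Qed.
End Bracket.

Section IndexMap.
Variables (dd w : nat -> nat) (R : nat -> nat -> Prop).
Hypotheses (dd0 : dd 0 = 0%N) (dd_lt : forall n, (dd n < dd n.+1)%N).
Hypotheses (w0 : w 0 = 0%N) (w_lt : forall m, (w m < w m.+1)%N).
Hypothesis R_of_bracket : forall n m, (w m <= dd n < w m.+1)%N -> R n m.
Hypothesis bracket_of_R : forall n m, R n m -> (w m <= dd n)%N /\ (dd n.+1 <= w m.+1)%N.

Let lam n : nat := xchoose (bracket_exists w0 w_lt (dd n)).

Lemma lam_bracket n : (w (lam n) <= dd n < w (lam n).+1)%N.
Proof. exact: (xchooseP (bracket_exists w0 w_lt (dd n))). Qed.

Lemma R_lam n m : R n m <-> m = lam n.
Proof.
split=> [hR|->]; last exact/R_of_bracket/lam_bracket.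
have [h1 h2] := bracket_of_R hR.
have hb : (w m <= dd n < w m.+1)%N by rewrite h1 (leq_trans (dd_lt n) h2).
exact: (bracket_uniq w_lt hb (lam_bracket n)).
Qed.

Lemma lam_homo n1 n2 : (n1 <= n2)%N -> (lam n1 <= lam n2)%N.
Proof.
move=> hn; rewrite leqNgt; apply/negP => hlt.
have /andP[h1 _] := lam_bracket n1; have /andP[_ h2] := lam_bracket n2.
have e1 : (w (lam n2).+1 <= w (lam n1))%N by rewrite (bracket_mono w_lt).
have e2 : (dd n1 <= dd n2)%N by rewrite (bracket_mono dd_lt).
by have := leq_trans e1 (leq_trans h1 e2); rewrite leqNgt h2.
Qed.

Lemma lam_hit m : exists n, dd n = w m /\ lam n = m.
Proof.
have [n /andP[hn1 hn2]] := bracket_exists dd0 dd_lt (w m).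
suff hdn : dd n = w m.
  have hb : (w m <= dd n < w m.+1)%N by rewrite hdn leqnn w_lt.
  by exists n; split=> //; apply: (bracket_uniq w_lt (lam_bracket n) hb).
apply/eqP; rewrite eqn_leq hn1 leqNgt; apply/negP => hlt.
have /andP[l1 _] := lam_bracket n.
have [_ b2] := bracket_of_R (R_of_bracket (lam_bracket n)).
have hm : (lam n < m)%N by rewrite -(bracket_mono_lt w_lt); apply: leq_ltn_trans l1 hlt.
have hw : (w (lam n).+1 <= w m)%N by rewrite (bracket_mono w_lt).
by have := leq_ltn_trans hw hn2; rewrite ltnNge b2.
Qed.

Lemma lam_min_preimage m n : lam n = m -> (forall n', lam n' = m -> (n <= n')%N) -> w m = dd n.
Proof.
move=> hlam hmin; have [n' [hdn' hlam']] := lam_hit m.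
have /andP[hlo _] := lam_bracket n; rewrite hlam in hlo.
by apply/eqP; rewrite eqn_leq hlo -hdn' (bracket_mono dd_lt) hmin.
Qed.

Lemma index_map_exists : exists lam : nat -> nat,
  (forall n, R n (lam n) /\ (forall m, R n m -> m = lam n)) /\
  (forall n1 n2, (n1 <= n2)%N -> (lam n1 <= lam n2)%N) /\
  (forall m, exists n, lam n = m) /\
  (forall m n, lam n = m -> (forall n', lam n' = m -> (n <= n')%N) -> w m = dd n).
Proof.
exists lam; split; first by move=> n; split=> [|m]; [apply/R_lam | move/R_lam].
split; first exact: lam_homo.
split; last exact: lam_min_preimage.
by move=> m; have [n [_ hn]] := lam_hit m; exists n.
Qed.
End IndexMap.

Section Valuation.
Variables (K k : fieldType) (D : dvr K k).
Local Notation v := (Defs.val D).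
Local Notation O := (inO D).
Local Notation rd := (red D).
Local Notation normalize q := (upi D ^ (- gaussv D q) *: q).

Lemma val1 : v 1 = 0.
Proof.
have := Defs.valM D (oner_neq0 K) (oner_neq0 K).
by rewrite mulr1 -{1}(addr0 (v 1)) => /addrI <-.
Qed.

Lemma inO0 : O 0.
Proof. by rewrite /inO eqxx. Qed.

Lemma inOD x y : O x -> O y -> O (x + y).
Proof.
have [->|hx] := eqVneq x 0; first by rewrite add0r.
have [->|hy] := eqVneq y 0; first by rewrite addr0.
rewrite /inO (negbTE hx) (negbTE hy) /= => h1 h2.
have [//|hxy] := eqVneq (x + y) 0; have := Defs.valD D hx hy hxy.
by rewrite ge_min => /orP[] /(le_trans _) ->.
Qed.

Lemma inOM x y : O x -> O y -> O (x * y).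
Proof.
have [->|hx] := eqVneq x 0; first by rewrite mul0r.
have [->|hy] := eqVneq y 0; first by rewrite mulr0.
by rewrite /inO (negbTE hx) (negbTE hy) (negbTE (mulf_neq0 hx hy)) Defs.valM //; lia.
Qed.

Lemma inO_sum I (r : seq I) (P : pred I) (f : I -> K) :
  (forall i, P i -> O (f i)) -> O (\sum_(i <- r | P i) f i).
Proof. by move=> h; apply: (big_ind O) => //; [exact: inO0 | exact: inOD]. Qed.

Lemma red0 : rd 0 = 0.
Proof.
have := @Defs.redD _ _ D 0 0 inO0 inO0.
by rewrite addr0 -{1}(addr0 (rd 0)) => /addrI <-.
Qed.

Lemma red_sum I (r : seq I) (P : pred I) (f : I -> K) :
  (forall i, P i -> O (f i)) -> rd (\sum_(i <- r | P i) f i) = \sum_(i <- r | P i) rd (f i).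
Proof.
move=> h; pose Rel x y := O x /\ rd x = y.
suff [] : Rel (\sum_(i <- r | P i) f i) (\sum_(i <- r | P i) rd (f i)) by [].
apply: (big_ind2 Rel); first by split; [exact: inO0 | exact: red0].
  by move=> x1 x2 y1 y2 [hx1 <-] [hx2 <-]; split; [exact: inOD | rewrite Defs.redD].
by move=> i hi; split; [exact: h |].
Qed.

Lemma val_upi_exprz (z : int) : v (upi D ^ z) = z.
Proof.
have hu := upi_neq0 D; have val_expn (n : nat) : v (upi D ^+ n) = n%:Z.
  elim: n => [|n IH]; first by rewrite expr0 val1.
  by rewrite exprS Defs.valM ?expf_neq0 // IH Defs.val_upi; lia.
case: z => n; first exact: val_expn.
have hn := expf_neq0 n.+1 hu; have := Defs.valM D hn (invr_neq0 hn).
by rewrite NegzE -exprnN mulfV // val1 val_expn; move: (v _) => x; lia.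
Qed.

Lemma gaussv_le (q : {poly K}) i : q`_i != 0 -> gaussv D q <= v q`_i.
Proof.
move=> hi; apply: ge_bigmin_seq => //; apply: mem_nth.
by rewrite ltnNge; apply: contra hi => /(nth_default 0) ->.
Qed.

Lemma gaussv_attained (q : {poly K}) : q != 0 -> exists2 i, q`_i != 0 & v q`_i = gaussv D q.
Proof.
move=> hq; rewrite /gaussv big_seq_cond.
apply: (big_ind (fun y => exists2 i, q`_i != 0 & v q`_i = y)).
- by exists (size q).-1; rewrite -?lead_coefE ?lead_coef_eq0.
- by move=> x y hx hy; rewrite /Order.min; case: ifP.
- move=> c /andP[/(nthP 0)[i _ <-] hc]; by exists i.
Qed.

Lemma inO_normalize (q : {poly K}) i : O (normalize q)`_i.
Proof.
rewrite coefZ; have [->|hi] := eqVneq q`_i 0; first by rewrite mulr0 inO0.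
have hs := expfz_neq0 (- gaussv D q) (upi_neq0 D).
rewrite /inO (negbTE (mulf_neq0 hs hi)) Defs.valM // val_upi_exprz /=.
by rewrite addrC subr_ge0 gaussv_le.
Qed.

Lemma red_normalize_neq0 (q : {poly K}) : q != 0 -> map_poly rd (normalize q) != 0.
Proof.
move=> hq; have [i hi hvi] := gaussv_attained hq.
have hs := expfz_neq0 (- gaussv D q) (upi_neq0 D).
have hred : rd (normalize q)`_i != 0.
  rewrite Defs.red_eq0; last by have := inO_normalize q i.
  rewrite coefZ (negbTE (mulf_neq0 hs hi)) Defs.valM // val_upi_exprz hvi addNr.
  by rewrite ltxx.
by apply: contraNneq hred => h0; rewrite -coef_map_id0 ?red0 // h0 coef0.
Qed.
End Valuation.

Section Reduction.
Variables (K k : fieldType) (D : dvr K k).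
Local Notation O := (inO D).
Local Notation rd := (red D).
Implicit Types (s : lser K) (p q : {poly K}) (d : int).

Lemma lcoef_lmap s d : lcoef (lmap rd s) d = rd (lcoef s d).
Proof. by rewrite /lcoef /=; case: ifP; rewrite ?red0. Qed.

Lemma lcoef_lpoly_map p d : lcoef (lpoly (map_poly rd p)) d = rd (lcoef (lpoly p) d).
Proof. by rewrite !lcoef_lpoly; case: ifP; rewrite ?red0 // coef_map_id0 // red0. Qed.

Lemma inO_lcoef_lpoly p d : (forall i, O p`_i) -> O (lcoef (lpoly p) d).
Proof. by move=> hp; rewrite lcoef_lpoly; case: ifP; rewrite ?inO0. Qed.

Lemma inO_lcoef_lmul s p d : (forall j, O (lcoef s j)) -> (forall i, O p`_i) ->
  O (lcoef (lmul s (lpoly p)) d).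
Proof.
move=> hs hp; set N := (absz (ltop s + (size p)%:Z - d)%R).+1.
rewrite (@lcoef_lmul_window _ s _ d (ltop s) N) //; last by rewrite /N /=; move: (size p) => n; lia.
by apply: inO_sum => i _; apply: inOM; [apply: hs | apply: inO_lcoef_lpoly].
Qed.

Lemma red_lcoef_lmul s p d : (forall j, O (lcoef s j)) -> (forall i, O p`_i) ->
  lcoef (lmul (lmap rd s) (lpoly (map_poly rd p))) d = rd (lcoef (lmul s (lpoly p)) d).
Proof.
move=> hs hp; have hsz : (size (map_poly rd p) <= size p)%N by apply: size_poly.
set N := (absz (ltop s + (size p)%:Z - d)%R).+1.
rewrite (@lcoef_lmul_window _ s _ d (ltop s) N) //; last by rewrite /N /=; move: (size p) => n; lia.
rewrite (@lcoef_lmul_window _ (lmap rd s) _ d (ltop s) N) //; last first.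
  by rewrite /N /=; move: (size p) (size (map_poly rd p)) hsz => x y; lia.
rewrite red_sum; last by move=> i _; apply: inOM; [apply: hs | apply: inO_lcoef_lpoly].
apply: eq_bigr => i _; rewrite /conv lcoef_lmap lcoef_lpoly_map Defs.redM //.
  exact: hs.
exact: inO_lcoef_lpoly.
Qed.

Lemma approx_inO (al : lser K) p q X : (forall j, O (lcoef al j)) ->
  (forall i, O q`_i) -> approx al p q X -> 0 < X -> forall i, O p`_i.
Proof.
move=> hal hq hpq hX i; have /eqP : lcoef (lerr al p q) i%:Z = 0 by apply: hpq; lia.
rewrite lcoef_lsub subr_eq0 lcoef_lpoly_nat => /eqP <-.
exact: inO_lcoef_lmul.
Qed.

Lemma approx_red (al : lser K) p q X : (forall j, O (lcoef al j)) ->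
  (forall i, O q`_i) -> (forall i, O p`_i) -> approx al p q X ->
  approx (lmap rd al) (map_poly rd p) (map_poly rd q) X.
Proof.
move=> hal hq hp hpq d hd; have /eqP := hpq d hd; rewrite lcoef_lsub subr_eq0 => /eqP e.
by rewrite lcoef_lsub red_lcoef_lmul // lcoef_lpoly_map e subrr.
Qed.
End Reduction.

(* [approx] unfolds to a product, so implicit-argument inference would hide the index [n]
   of the lemmas below. *)
Unset Implicit Arguments.

Section ReducedConvergents.
Context {K k : fieldType} {D : dvr K k}.
Context {al : lser K} {als : nat -> lser K} {gs : nat -> lser k}.
Hypothesis al_inO : forall d, inO D (lcoef al d).
Hypothesis al_cf : is_cf_seq al als.
Hypothesis gam_cf : is_cf_seq (lmap (red D) al) gs.

Local Notation gam := (lmap (red D) al).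
Local Notation p n := (cfp (fun i => lfloor (als i)) n).
Local Notation q n := (cfq (fun i => lfloor (als i)) n).
Local Notation u m := (cfp (fun i => lfloor (gs i)) m).
Local Notation v m := (cfq (fun i => lfloor (gs i)) m).
Local Notation s n := (upi D ^ (- gaussv D (q n))).
Local Notation pt n := (map_poly (red D) (s n *: p n)).
Local Notation qt n := (map_poly (red D) (s n *: q n)).
Local Notation dd n := (size (q n)).-1.
Local Notation w m := (size (v m)).-1.

Lemma inO_normalized_cfq n i : inO D (s n *: q n)`_i.
Proof. exact: inO_normalize. Qed.

Lemma approx_normalized_cf n : approx al (s n *: p n) (s n *: q n) (dd n.+1)%:Z.
Proof. exact/approx_scale/(approx_cf al_cf). Qed.

Lemma inO_normalized_cfp n i : inO D (s n *: p n)`_i.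
Proof.
apply: approx_inO al_inO (inO_normalized_cfq n) (approx_normalized_cf n) _ i.
by rewrite ltz_nat; apply: leq_ltn_trans (leq0n _) (size_cfq_lt al_cf n).
Qed.

Lemma reduced_cfq_neq0 n : qt n != 0.
Proof. exact/red_normalize_neq0/(cfq_neq0 al_cf). Qed.

Lemma size_reduced_cfq n : (size (qt n) <= (dd n).+1)%N.
Proof.
rewrite prednK ?size_poly_gt0 ?(cfq_neq0 al_cf) //.
by apply: leq_trans (size_poly _ _) (size_scale_leq _ _).
Qed.

Lemma size_reduced_cfq_lt n : ((size (qt n)).-1 < dd n.+1)%N.
Proof.
apply: leq_ltn_trans (size_cfq_lt al_cf n).
by rewrite -ltnS prednK ?size_reduced_cfq // size_poly_gt0 reduced_cfq_neq0.
Qed.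

Lemma approx_reduced_cf n : approx gam (pt n) (qt n) (dd n.+1)%:Z.
Proof.
exact: approx_red al_inO (inO_normalized_cfq n) (inO_normalized_cfp n) (approx_normalized_cf n).
Qed.

Definition reduced_multiple n m :=
  exists h : {poly k}, h != 0 /\ pt n = h * u m /\ qt n = h * v m.

Lemma reduced_multiple_of_bracket n m : (w m <= dd n < w m.+1)%N -> reduced_multiple n m.
Proof.
move=> hb; have hap : approx gam (pt n) (qt n) (dd n).+1%:Z.
  by apply: approx_le (approx_reduced_cf n); rewrite lez_nat; exact: (size_cfq_lt al_cf).
have [h hh [ep eq]] := approx_cf_multiple gam_cf (reduced_cfq_neq0 n) (size_reduced_cfq n) hap hb.
by exists h.
Qed.

Lemma bracket_of_reduced_multiple n m : reduced_multiple n m ->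
  (w m <= dd n)%N /\ (dd n.+1 <= w m.+1)%N.
Proof.
move=> [h [hh [ep eq]]]; have hv := cfq_neq0 gam_cf m.
have := size_reduced_cfq n; rewrite eq size_mul //.
have := approx_reduced_cf n; rewrite ep eq => /(approx_multiple_bound gam_cf hh).
have := size_poly_gt0 h; have := size_poly_gt0 (v m); rewrite hh hv.
by move: (size h) (size (v m)) (dd n) (dd n.+1) (w m.+1) => x y z z' y'; lia.
Qed.
End ReducedConvergents.

Theorem mainTheorem4 (K k : fieldType) (D : dvr K k)
  (char_k_neq2 : (2%:R : k) != 0)
  (al : lser K) (als : nat -> lser K) (gs : nat -> lser k) :
  (forall d, inO D (lcoef al d)) ->
  (exists N : int, is_lead al N /\ unitO D (lcoef al N) /\ - N <= 0) ->
  ~ is_rat_ls al ->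
  ~ is_rat_ls (lmap (red D) al) ->
  is_cf_seq al als ->
  is_cf_seq (lmap (red D) al) gs ->
  let gam := lmap (red D) al in
  let p := cfp (fun i => lfloor (als i)) in
  let q := cfq (fun i => lfloor (als i)) in
  let u := cfp (fun i => lfloor (gs i)) in
  let v := cfq (fun i => lfloor (gs i)) in
  let s := fun n => upi D ^ (- gaussv D (q n)) in
  let pt := fun n => map_poly (red D) (s n *: p n) in
  let qt := fun n => map_poly (red D) (s n *: q n) in
  (forall n,
     (forall i, inO D (s n *: p n)`_i) /\ (forall i, inO D (s n *: q n)`_i) /\
     qt n != 0 /\
     ord_gt (lsub (lpoly (pt n)) (lmul gam (lpoly (qt n)))) (size (qt n)).-1%:Z) /\
  exists lam : nat -> nat,
    (forall n,
       (exists h : {poly k}, h != 0 /\ pt n = h * u (lam n) /\ qt n = h * v (lam n)) /\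
       (forall m, (exists h : {poly k}, h != 0 /\ pt n = h * u m /\ qt n = h * v m) ->
                  m = lam n)) /\
    (forall n1 n2, (n1 <= n2)%N -> (lam n1 <= lam n2)%N) /\
    (forall m, exists n, lam n = m) /\
    (forall m n, lam n = m -> (forall n', lam n' = m -> (n <= n')%N) ->
       (size (v m)).-1 = (size (q n)).-1).
Proof.
move=> al_inO _ _ _ al_cf gam_cf gam p q u v s pt qt; split=> [n|].
  split; first exact: inO_normalized_cfp al_inO al_cf n.
  split; first exact: inO_normalized_cfq.
  split; first exact: reduced_cfq_neq0 al_cf n.
  apply: ord_gt_approx (approx_reduced_cf al_inO al_cf n).
  by rewrite ltz_nat; apply: size_reduced_cfq_lt al_cf n.
exact: (index_map_exists (size_cfq0 als) (size_cfq_lt al_cf) (size_cfq0 gs) (size_cfq_lt gam_cf)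
  (reduced_multiple_of_bracket al_inO al_cf gam_cf)
  (bracket_of_reduced_multiple al_inO al_cf gam_cf)).
Qed.
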